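(* Let $d\geq1$ and let $\varphi:\mathbb R_+\to\mathbb R$ be smooth with compact support contained in $(0,1)$. For $n\geq1$ and $t\geq0$, let $\mathcal G^n_t$ denote the function on $\mathbb R^d$ whose spatial Fourier transform is $\mathcal F_x(\mathcal G^n_t)(\eta)=\mathbf 1_{\{|\eta|\leq n\}}\frac{\sin(t|\eta|)}{|\eta|}$. For $\xi,\tilde\xi\geq0$ and $\eta,\tilde\eta\in\mathbb R^d\setminus\{0\}$, set $$M^n_\varphi((\xi,\eta),(\tilde\xi,\tilde\eta)):=\frac{1}{4|\eta||\tilde\eta|}\int_0^\infty dt\,\varphi(t)\int_0^tdu\,e^{\imath u(\xi-\tilde\xi)}\mathcal F_x(\mathcal G^n_{t-u})(\eta-\tilde\eta)\int_0^uds\,e^{-\imath s(\xi-|\eta|)}\int_0^udr\,e^{\imath r(\tilde\xi-|\tilde\eta|)}.$$ Then there exist functions $R^n_\varphi$ ($n\geq1$) such that for all $n\geq1$, $\xi,\tilde\xi\geq0$ and $\eta,\tilde\eta\in\mathbb R^d\setminus\{0\}$, $$\int_0^\infty dt\,\varphi(t)\int_0^tdu\,e^{\imath u(\xi-\tilde\xi)}\mathcal F_x(\mathcal G^n_{t-u})(\eta-\tilde\eta)\int_0^uds\,e^{-\imath\xi s}\mathcal F_x(\mathcal G^n_s)(\eta)\int_0^udr\,e^{\imath\tilde\xi r}\mathcal F_x(\mathcal G^n_r)(\tilde\eta)$$ $$=\mathbf 1_{\{|\eta|\leq n\}}\mathbf 1_{\{|\tilde\eta|\leq n\}}\Big[M^n_\varphi((\xi,\eta),(\tilde\xi,\tilde\eta))+R^n_\varphi((\xi,\eta),(\tilde\xi,\tilde\eta))\Big],$$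 and, for every $\kappa\in[0,1]$, there is a constant $C$ (independent of $n,\xi,\tilde\xi,\eta,\tilde\eta$) with $$\sup_{n\geq1}\big|R^n_\varphi((\xi,\eta),(\tilde\xi,\tilde\eta))\big|\leq\frac{C}{|\eta||\tilde\eta|}\bigg[\frac{1}{|\xi-|\eta||^\kappa\,|\tilde\xi+|\tilde\eta||}+\frac{1}{|\xi+|\eta||\,|\tilde\xi+|\tilde\eta||}+\frac{1}{|\xi+|\eta||\,|\tilde\xi-|\tilde\eta||^\kappa}\bigg].$$
   Context: Spatial Fourier transform: $\mathcal F_x\psi(\eta)=\int_{\mathbb R^d}e^{-\imath\langle\eta,x\rangle}\psi(x)\,dx$. Terms with a vanishing denominator in the bound are interpreted as $+\infty$. *)

From Stdlib Require Import Reals.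
From mathcomp Require Import all_boot all_algebra.
From mathcomp Require Import Rstruct.
From Coquelicot Require Import Coquelicot.
Set Implicit Arguments.
Unset Strict Implicit.
Open Scope R_scope.

Definition vnorm (d : nat) (v : 'rV[R]_d) : R :=
  sqrt (\sum_(i < d) (v ord0 i * v ord0 i))%R.

Definition vsub (d : nat) (v w : 'rV[R]_d) : 'rV[R]_d :=
  GRing.add v (GRing.opp w).

Definition cis (x : R) : C := (cos x, sin x).

Definition CInt (f : R -> C) (a b : R) : C :=
  @RInt C_R_CompleteNormedModule f a b.

(* F_x(G^n_t)(eta) = 1_{|eta| <= n} sin(t|eta|)/|eta|
   (continuously extended by its value t at eta = 0). *)
Definition FG (d : nat) (n : nat) (t : R) (eta : 'rV[R]_d) : R :=
  if Rle_dec (vnorm eta) (INR n) then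
    (if Req_EM_T (vnorm eta) 0 then t else sin (t * vnorm eta) / vnorm eta)
  else 0.

Definition indic (d : nat) (n : nat) (eta : 'rV[R]_d) : R :=
  if Rle_dec (vnorm eta) (INR n) then 1 else 0.

Definition smooth_supp01 (phi : R -> R) : Prop :=
  (forall (k : nat) (x : R), ex_derive_n phi k x) /\
  exists a b : R, 0 < a /\ a <= b /\ b < 1 /\
    forall x, (x < a \/ b < x) -> phi x = 0.

(* The left-hand side integral.  Since supp phi is in (0,1), the
   t-integral over [0,oo) is the integral over [0,1]. *)
Definition LHSint (d : nat) (phi : R -> R) (n : nat)
    (xi : R) (eta : 'rV[R]_d) (xi' : R) (eta' : 'rV[R]_d) : C :=
  CInt (fun t =>
    Cmult (RtoC (phi t))
      (CInt (fun u =>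
         Cmult (Cmult (Cmult (cis (u * (xi - xi'))) (RtoC (FG n (t - u) (vsub eta eta'))))
           (CInt (fun s => Cmult (cis (- (xi * s))) (RtoC (FG n s eta))) 0 u))
           (CInt (fun r => Cmult (cis (xi' * r)) (RtoC (FG n r eta'))) 0 u))
       0 t)) 0 1.

Definition Mphi (d : nat) (phi : R -> R) (n : nat)
    (xi : R) (eta : 'rV[R]_d) (xi' : R) (eta' : 'rV[R]_d) : C :=
  Cmult (RtoC (1 / (4 * vnorm eta * vnorm eta')))
  (CInt (fun t =>
    Cmult (RtoC (phi t))
      (CInt (fun u =>
         Cmult (Cmult (Cmult (cis (u * (xi - xi'))) (RtoC (FG n (t - u) (vsub eta eta'))))
           (CInt (fun s => cis (- (s * (xi - vnorm eta)))) 0 u))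
           (CInt (fun r => cis (r * (xi' - vnorm eta'))) 0 u))
       0 t)) 0 1).

(* The bracket in the bound; Rpower a k = a^k for a > 0, and a^0 = 1. *)
Definition bound_bracket (d : nat) (kappa : R)
    (xi : R) (eta : 'rV[R]_d) (xi' : R) (eta' : 'rV[R]_d) : R :=
  1 / (Rpower (Rabs (xi - vnorm eta)) kappa * Rabs (xi' + vnorm eta'))
  + 1 / (Rabs (xi + vnorm eta) * Rabs (xi' + vnorm eta'))
  + 1 / (Rabs (xi + vnorm eta) * Rpower (Rabs (xi' - vnorm eta')) kappa).

From Stdlib Require Import Reals Lra.
From mathcomp Require Import all_boot all_algebra.
From mathcomp Require Import Rstruct.
From Coquelicot Require Import Coquelicot.
Set Implicit Arguments.
Unset Strict Implicit.
Open Scope R_scope.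

(* Inside the ball |eta| <= n, F_x(G^n_s)(eta) = sin(s|eta|)/|eta|
   = (e^{is|eta|} - e^{-is|eta|}) / (2i|eta|), so each inner integral of the
   left-hand side splits into a resonant part, of frequency xi - |eta|
   (resp. xi' - |eta'|), and a non-resonant part, of frequency xi + |eta|
   (resp. xi' + |eta'|).  The product of the two resonant parts is exactly
   M^n_phi, and R^n_phi is the same outer integral applied to the three other
   products.  Each of them has a non-resonant factor, and since
   |int_0^u e^{isc} ds| <= min(u, 2/|c|) <= 2/|c|^kappa for u <= 1 while
   |F_x(G^n_{t-u})| <= t - u <= 1, each is bounded by the corresponding term of
   the bracket, uniformly in n.  Outside the ball the left-hand side vanishes. *)

Lemma continuous_C_pair (f : R -> C) (x : R) :
  continuous (fun y => fst (f y)) x -> continuous (fun y => snd (f y)) x ->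
  continuous f x.
Proof.
move=> h1 h2 P [eps HP].
have b1 : locally x (fun y => ball (fst (f x)) eps (fst (f y))).
  exact: h1 _ (locally_ball _ eps).
have b2 : locally x (fun y => ball (snd (f x)) eps (snd (f y))).
  exact: h2 _ (locally_ball _ eps).
change (locally x (fun y => P (f y))).
generalize (filter_and _ _ b1 b2); apply filter_imp => y [y1 y2].
apply: HP; split; assumption.
Qed.

Lemma continuous_C_fst (f : R -> C) (x : R) :
  continuous f x -> continuous (fun y => fst (f y)) x.
Proof. by move=> hf; apply: continuous_comp hf _; apply: continuous_fst. Qed.

Lemma continuous_C_snd (f : R -> C) (x : R) :
  continuous f x -> continuous (fun y => snd (f y)) x.
Proof. by move=> hf; apply: continuous_comp hf _; apply: continuous_snd. Qed.

Section ComplexContinuity.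

Variables (f g : R -> C) (x : R).
Hypotheses (f_cont : continuous f x) (g_cont : continuous g x).

Let f1 := continuous_C_fst f_cont.
Let f2 := continuous_C_snd f_cont.
Let g1 := continuous_C_fst g_cont.
Let g2 := continuous_C_snd g_cont.

Lemma continuous_Cplus : continuous (fun y => (f y + g y)%C) x.
Proof. by apply: continuous_C_pair; apply: continuous_plus. Qed.

Lemma continuous_Cminus : continuous (fun y => (f y - g y)%C) x.
Proof.
apply: continuous_C_pair; apply: continuous_plus => //; exact: continuous_opp.
Qed.

Lemma continuous_Cmult : continuous (fun y => (f y * g y)%C) x.
Proof.
apply: continuous_C_pair; simpl.
- apply: continuous_minus; apply: continuous_mult; assumption.
- apply: continuous_plus; apply: continuous_mult; assumption.
Qed.

End ComplexContinuity.

Lemma continuous_RtoC (h : R -> R) (x : R) :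
  continuous h x -> continuous (fun y => RtoC (h y)) x.
Proof. by move=> hh; apply: continuous_C_pair; [exact: hh | exact: continuous_const]. Qed.

Lemma continuous_cis_lin (c x : R) : continuous (fun s => cis (s * c)) x.
Proof.
apply: continuous_C_pair; rewrite /cis /=; apply: ex_derive_continuous; by auto_derive.
Qed.

Lemma Cmod_cis (x : R) : Cmod (cis x) = 1.
Proof.
rewrite /Cmod /cis /=.
have -> : cos x * (cos x * 1) + sin x * (sin x * 1) = 1.
  by have := sin2_cos2 x; rewrite /Rsqr; lra.
exact: sqrt_1.
Qed.

Section ComplexIntegral.

Implicit Types (f : R -> C) (a b : R).

Lemma is_CInt f a b :
  (forall x, continuous f x) -> is_RInt f a b (CInt f a b).
Proof.
move=> hf; apply: (RInt_correct (V:=C_R_CompleteNormedModule)).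
by apply: ex_RInt_continuous => x _.
Qed.

Lemma continuous_CInt f a (x : R) :
  (forall y, continuous f y) -> continuous (fun u => CInt f a u) x.
Proof.
move=> hf; apply: (continuous_RInt_1 f a x).
by apply: filter_forall => u; apply: is_CInt.
Qed.

Lemma is_RInt_Cmult_l (c : C) f a b (l : C) :
  is_RInt f a b l -> is_RInt (fun x => (c * f x)%C) a b (c * l)%C.
Proof.
move=> hf.
have h1 := is_RInt_fct_extend_fst (U:=R_NormedModule) (V:=R_NormedModule) f a b l hf.
have h2 := is_RInt_fct_extend_snd (U:=R_NormedModule) (V:=R_NormedModule) f a b l hf.
apply: (is_RInt_fct_extend_pair (U:=R_NormedModule) (V:=R_NormedModule)) => /=.
- apply: (is_RInt_ext (fun x => minus (scal c.1 (f x).1) (scal c.2 (f x).2))) => [//|].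
  by apply: is_RInt_minus; apply: is_RInt_scal.
- apply: (is_RInt_ext (fun x => plus (scal c.1 (f x).2) (scal c.2 (f x).1))) => [//|].
  by apply: is_RInt_plus; apply: is_RInt_scal.
Qed.

Lemma CInt_lin (c1 c2 : C) (f1 f2 : R -> C) a b :
  (forall x, continuous f1 x) -> (forall x, continuous f2 x) ->
  CInt (fun x => (c1 * f1 x + c2 * f2 x)%C) a b =
  (c1 * CInt f1 a b + c2 * CInt f2 a b)%C.
Proof.
move=> h1 h2; apply: (is_RInt_unique (V:=C_R_CompleteNormedModule)).
by apply: is_RInt_plus; apply: is_RInt_Cmult_l; apply: is_CInt.
Qed.

Lemma CInt_ext f g a b :
  (forall x, Rmin a b < x < Rmax a b -> f x = g x) -> CInt f a b = CInt g a b.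
Proof. exact: (RInt_ext (V:=C_R_CompleteNormedModule)). Qed.

Lemma CInt_0 a b : CInt (fun _ => 0%C) a b = 0%C.
Proof. by rewrite /CInt RInt_const; apply: (scal_zero_r (V:=C_R_NormedModule)). Qed.

Lemma Cmod_CInt_le f a b (M : R) :
  a <= b -> (forall x, continuous f x) ->
  (forall x, a <= x <= b -> Cmod (f x) <= M) -> Cmod (CInt f a b) <= (b - a) * M.
Proof.
move=> hab hf hM; rewrite Cmod_norm.
apply: (norm_RInt_le_const (V:=C_R_NormedModule) f a b (CInt f a b) M hab).
- by move=> x hx; rewrite -Cmod_norm; apply: hM.
- exact: is_CInt.
Qed.

End ComplexIntegral.

Lemma Rabs_sin_le (y : R) : Rabs (sin y) <= Rabs y.
Proof.
wlog hy : y / 0 <= y.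
  move=> H; case: (Rle_lt_dec 0 y) => [|hy]; first exact: H.
  by rewrite -Rabs_Ropp -sin_neg -(Rabs_Ropp y); apply: H; lra.
rewrite (Rabs_pos_eq y hy); apply: Rabs_le; split.
- case: (Rle_lt_dec 1 y) => hy1; first by have := SIN_bound y; lra.
  have : 0 <= sin y by apply: sin_ge_0; have := PI2_1; lra.
  lra.
- case: hy => [hy|<-]; last by rewrite sin_0; lra.
  by have := sin_lt_x y hy; lra.
Qed.

Lemma Rpower_le_Rmax_1 (x k : R) :
  0 <= k <= 1 -> (0 < k -> 0 < x) -> Rpower x k <= Rmax 1 x.
Proof.
move=> hk hx; case: (Req_dec k 0) => [->|hk0].
  by rewrite /Rpower Rmult_0_l exp_0; apply: Rmax_l.
have {}hx : 0 < x by apply: hx; lra.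
case: (Rle_lt_dec x 1) => hx1.
- apply: Rle_trans (Rmax_l _ _).
  have -> : 1 = Rpower 1 k by rewrite /Rpower ln_1 Rmult_0_r exp_0.
  by apply: Rle_Rpower_l; lra.
- apply: Rle_trans (Rmax_r _ _).
  rewrite -{2}(Rpower_1 x hx); apply: Rle_Rpower; lra.
Qed.

Definition cis_int (c u : R) : C := CInt (fun s => cis (s * c)) 0 u.

Lemma continuous_cis_int (c u : R) : continuous (cis_int c) u.
Proof. by apply: continuous_CInt => x; apply: continuous_cis_lin. Qed.

Lemma cis_intE (c u : R) : c <> 0 ->
  cis_int c u = ((1 - cis (u * c)) * Ci / RtoC c)%C.
Proof.
move=> hc.
have -> : ((1 - cis (u * c)) * Ci / RtoC c)%C = (sin (u * c) / c, (1 - cos (u * c)) / c).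
  by apply: injective_projections => /=; field.
apply: (is_RInt_unique (V:=C_R_CompleteNormedModule)).
apply: (is_RInt_fct_extend_pair (U:=R_NormedModule) (V:=R_NormedModule)) => /=.
- have -> : sin (u * c) / c = minus (sin (u * c) / c) (sin (0 * c) / c).
    by rewrite Rmult_0_l sin_0 /minus /plus /opp /=; field.
  apply: (is_RInt_derive (fun s => sin (s * c) / c)) => x _.
  + by auto_derive => //; field.
  + by apply: ex_derive_continuous; auto_derive.
- have -> : (1 - cos (u * c)) / c = minus (- cos (u * c) / c) (- cos (0 * c) / c).
    by rewrite Rmult_0_l cos_0 /minus /plus /opp /=; field.
  apply: (is_RInt_derive (fun s => - cos (s * c) / c)) => x _.
  + by auto_derive => //; field.
  + by apply: ex_derive_continuous; auto_derive.
Qed.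

Lemma Cmod_cis_int_le_length (c u : R) : 0 <= u -> Cmod (cis_int c u) <= u.
Proof.
move=> hu; rewrite -[u in _ <= u]Rmult_1_r -[u in u * _]Rminus_0_r.
apply: Cmod_CInt_le => // [x|x _]; first exact: continuous_cis_lin.
by rewrite Cmod_cis; lra.
Qed.

Lemma Cmod_cis_int_le_inv (c u : R) : c <> 0 -> Cmod (cis_int c u) <= 2 / Rabs c.
Proof.
move=> hc; have hc' : RtoC c <> 0%C by case.
rewrite cis_intE // Cmod_div // Cmod_mult Cmod_Ci Cmod_R Rmult_1_r.
apply: Rmult_le_compat_r; first by apply/Rlt_le/Rinv_0_lt_compat/Rabs_pos_lt.
apply: Rle_trans (Cmod_triangle _ _) _.
by rewrite Cmod_opp Cmod_1 Cmod_cis; lra.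
Qed.

Lemma Cmod_cis_int_le_pow (c u k : R) :
  0 <= u <= 1 -> 0 <= k <= 1 -> (0 < k -> c <> 0) ->
  Cmod (cis_int c u) <= 2 / Rpower (Rabs c) k.
Proof.
move=> hu hk hc.
have hpow : Rpower (Rabs c) k <= Rmax 1 (Rabs c).
  by apply: Rpower_le_Rmax_1 => // /hc; apply: Rabs_pos_lt.
have hpos : 0 < Rpower (Rabs c) k by apply: exp_pos.
apply: Rle_trans (_ : 2 / Rmax 1 (Rabs c) <= _).
- rewrite /Rmax; case: Rle_dec => hc1.
  + by apply: Cmod_cis_int_le_inv => c0; move: hc1; rewrite c0 Rabs_R0; lra.
  + by have := Cmod_cis_int_le_length c (proj1 hu); lra.
- by apply: Rmult_le_compat_l; [lra | apply: Rinv_le_contravar].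
Qed.

Lemma cis_mul_sin_div (x y a : R) : a <> 0 ->
  (cis x * RtoC (sin y / a) = (cis (x + y) - cis (x - y)) / (2 * Ci * RtoC a))%C.
Proof.
move=> ha; rewrite /cis sin_plus sin_minus cos_plus cos_minus.
by apply: injective_projections => /=; field.
Qed.

Lemma CInt_cis_sin_div (b a u : R) : a <> 0 ->
  CInt (fun s => cis (s * b) * RtoC (sin (s * a) / a))%C 0 u =
  ((cis_int (b + a) u - cis_int (b - a) u) / (2 * Ci * RtoC a))%C.
Proof.
move=> ha; pose w := (/ (2 * Ci * RtoC a))%C.
transitivity (CInt (fun s => w * cis (s * (b + a)) + (- w) * cis (s * (b - a)))%C 0 u).
- apply: CInt_ext => s _.
  rewrite cis_mul_sin_div //.
  have -> : s * b + s * a = s * (b + a) by ring.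
  have -> : s * b - s * a = s * (b - a) by ring.
  by rewrite /Cdiv -/w; ring.
- rewrite CInt_lin => [|x|x]; try exact: continuous_cis_lin.
  by rewrite /Cdiv -/w /cis_int; ring.
Qed.

Definition nonresonant (xi a xi' a' u : R) : C :=
  (RtoC (- (1 / (4 * a * a'))) *
   (cis_int (a - xi) u * cis_int (xi' + a') u
    - cis_int (- (xi + a)) u * cis_int (xi' + a') u
    + cis_int (- (xi + a)) u * cis_int (xi' - a') u))%C.

Lemma continuous_nonresonant (xi a xi' a' u : R) :
  continuous (nonresonant xi a xi' a') u.
Proof.
apply: continuous_Cmult; first exact: continuous_const.
apply: continuous_Cplus; first apply: continuous_Cminus;
  apply: continuous_Cmult; exact: continuous_cis_int.
Qed.

Lemma resonant_split (P N Q A : C) (a a' : R) : a <> 0 -> a' <> 0 ->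
  ((P - N) / (2 * Ci * RtoC a) * ((Q - A) / (2 * Ci * RtoC a')) =
   RtoC (1 / (4 * a * a')) * (P * A) +
   RtoC (- (1 / (4 * a * a'))) * (P * Q - N * Q + N * A))%C.
Proof.
move: P N Q A => [p1 p2] [n1 n2] [q1 q2] [s1 s2] ha ha'.
by apply: injective_projections => /=; field.
Qed.

Lemma Cmod_nonresonant_le (xi a xi' a' k u : R) :
  0 < a -> 0 < a' -> 0 <= xi -> 0 <= xi' -> 0 <= k <= 1 ->
  (0 < k -> xi <> a) -> (0 < k -> xi' <> a') -> 0 <= u <= 1 ->
  Cmod (nonresonant xi a xi' a' u) <=
  (1 / (Rpower (Rabs (xi - a)) k * Rabs (xi' + a'))
   + 1 / (Rabs (xi + a) * Rabs (xi' + a'))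
   + 1 / (Rabs (xi + a) * Rpower (Rabs (xi' - a')) k)) / (a * a').
Proof.
move=> ha ha' hxi hxi' hk hk1 hk2 hu.
have hP : Cmod (cis_int (a - xi) u) <= 2 / Rpower (Rabs (xi - a)) k.
  rewrite Rabs_minus_sym; apply: Cmod_cis_int_le_pow => // /hk1; lra.
have hA : Cmod (cis_int (xi' - a') u) <= 2 / Rpower (Rabs (xi' - a')) k.
  apply: Cmod_cis_int_le_pow => // /hk2; lra.
have hN : Cmod (cis_int (- (xi + a)) u) <= 2 / Rabs (xi + a).
  rewrite -(Rabs_Ropp (xi + a)); apply: Cmod_cis_int_le_inv; lra.
have hQ : Cmod (cis_int (xi' + a') u) <= 2 / Rabs (xi' + a').
  apply: Cmod_cis_int_le_inv; lra.
have hp1 : 0 < Rpower (Rabs (xi - a)) k by apply: exp_pos.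
have hp2 : 0 < Rpower (Rabs (xi' - a')) k by apply: exp_pos.
have hq : 0 < Rabs (xi' + a') by apply: Rabs_pos_lt; lra.
have hn : 0 < Rabs (xi + a) by apply: Rabs_pos_lt; lra.
have hcoef : 0 <= 1 / (4 * a * a').
  by apply/Rlt_le/Rdiv_lt_0_compat; [lra | apply: Rmult_lt_0_compat; lra].
rewrite /nonresonant Cmod_mult Cmod_R Rabs_Ropp Rabs_pos_eq //.
apply: Rle_trans (Rmult_le_compat_l _ _ _ hcoef (Cmod_triangle _ _)) _.
apply: Rle_trans (Rmult_le_compat_l _ _ _ hcoef
  (Rplus_le_compat_r _ _ _ (Cmod_triangle _ _))) _.
rewrite Cmod_opp !Cmod_mult.
apply: Rle_trans (Rmult_le_compat_l _ _ _ hcoef (_ : _ <=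
  2 / Rpower (Rabs (xi - a)) k * (2 / Rabs (xi' + a'))
  + 2 / Rabs (xi + a) * (2 / Rabs (xi' + a'))
  + 2 / Rabs (xi + a) * (2 / Rpower (Rabs (xi' - a')) k))) _.
  by repeat apply: Rplus_le_compat; apply: Rmult_le_compat => //; apply: Cmod_ge_0.
by right; field; repeat split; lra.
Qed.

(* Separating the variables of [K] makes [t |-> int_0^t K t u * g u du]
   continuous, hence integrable against [phi]. *)
Definition separable (K : R -> R -> C) : Prop :=
  exists al be ga de : R -> C,
    [/\ forall x, continuous al x, forall x, continuous be x,
        forall x, continuous ga x, forall x, continuous de x &
        forall t u, K t u = (al t * be u + ga t * de u)%C].

Section Volterra.

Variables (phi : R -> R) (K : R -> R -> C).
Hypothesis phi_cont : forall x, continuous phi x.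
Hypothesis K_sep : separable K.

Definition volterra (g : R -> C) : C :=
  CInt (fun t => RtoC (phi t) * CInt (fun u => K t u * g u) 0 t)%C 0 1.

Lemma volterra_ext (g1 g2 : R -> C) :
  (forall u, g1 u = g2 u) -> volterra g1 = volterra g2.
Proof.
move=> e; apply: CInt_ext => t _; congr Cmult.
by apply: CInt_ext => u _; rewrite e.
Qed.

Lemma volterra_0 : volterra (fun _ => 0%C) = 0%C.
Proof.
rewrite -[RHS](CInt_0 0 1); apply: CInt_ext => t _.
have -> : CInt (fun u => K t u * 0)%C 0 t = CInt (fun _ => 0%C) 0 t.
  by apply: CInt_ext => u _; rewrite Cmult_0_r.
by rewrite CInt_0 Cmult_0_r.
Qed.

Lemma continuous_kernel (t u : R) : continuous (K t) u.
Proof.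
move: K_sep => [al [be [ga [de [hal hbe hga hde eK]]]]].
apply: (continuous_ext (fun u => al t * be u + ga t * de u)%C) => [v|]; first by rewrite eK.
by apply: continuous_Cplus; apply: continuous_Cmult => //; apply: continuous_const.
Qed.

Lemma continuous_CInt_kernel (g : R -> C) (x : R) :
  (forall u, continuous g u) ->
  continuous (fun t => CInt (fun u => K t u * g u)%C 0 t) x.
Proof.
move: K_sep => [al [be [ga [de [hal hbe hga hde eK]]]]] hg.
have hbg : forall u, continuous (fun u => be u * g u)%C u.
  by move=> u; apply: continuous_Cmult.
have hdg : forall u, continuous (fun u => de u * g u)%C u.
  by move=> u; apply: continuous_Cmult.
apply: (continuous_ext (fun t => al t * CInt (fun u => be u * g u) 0 t
                              + ga t * CInt (fun u => de u * g u) 0 t)%C).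
- move=> t; rewrite -CInt_lin //; apply: CInt_ext => u _.
  by rewrite eK; ring.
- by apply: continuous_Cplus; apply: continuous_Cmult => //; apply: continuous_CInt.
Qed.

Lemma continuous_volterra_integrand (g : R -> C) (x : R) :
  (forall u, continuous g u) ->
  continuous (fun t => RtoC (phi t) * CInt (fun u => K t u * g u) 0 t)%C x.
Proof.
move=> hg; apply: continuous_Cmult; first exact: continuous_RtoC.
exact: continuous_CInt_kernel.
Qed.

Lemma volterra_lin (c : C) (g1 g2 : R -> C) :
  (forall u, continuous g1 u) -> (forall u, continuous g2 u) ->
  volterra (fun u => c * g1 u + g2 u)%C = (c * volterra g1 + volterra g2)%C.
Proof.
move=> h1 h2; rewrite /volterra -[X in _ = (_ + X)%C]Cmult_1_l -CInt_lin;
  try by move=> x; apply: continuous_volterra_integrand.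
apply: CInt_ext => t _.
rewrite (_ : CInt _ 0 t = c * CInt (fun u => K t u * g1 u) 0 t
                        + 1 * CInt (fun u => K t u * g2 u) 0 t)%C; first by ring.
rewrite -CInt_lin; first by apply: CInt_ext => u _; ring.
- by move=> u; apply: continuous_Cmult => //; apply: continuous_kernel.
- by move=> u; apply: continuous_Cmult => //; apply: continuous_kernel.
Qed.

Lemma Cmod_volterra_le (g : R -> C) (M : R) :
  (forall u, continuous g u) ->
  (forall t u, 0 <= u <= t -> t <= 1 -> Cmod (K t u) <= 1) ->
  (forall u, 0 <= u <= 1 -> Cmod (g u) <= M) ->
  Cmod (volterra g) <= RInt (fun t => Rabs (phi t)) 0 1 * M.
Proof.
move=> hg hK hM.
have M0 : 0 <= M by apply: Rle_trans (hM 0 _); [apply: Cmod_ge_0 | lra].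
have hinner t : 0 <= t <= 1 -> Cmod (CInt (fun u => K t u * g u) 0 t)%C <= M.
  move=> ht; apply: Rle_trans (_ : (t - 0) * (1 * M) <= M); last by nra.
  apply: Cmod_CInt_le => [|u|u hu]; first lra.
  - by apply: continuous_Cmult => //; apply: continuous_kernel.
  - rewrite Cmod_mult; apply: Rmult_le_compat; try apply: Cmod_ge_0.
    + by apply: hK; lra.
    + by apply: hM; lra.
have habs x : continuous (fun t => Rabs (phi t)) x.
  by apply: continuous_comp; [apply: phi_cont | apply: continuous_Rabs].
rewrite Cmod_norm; apply: (norm_RInt_le (V:=C_R_NormedModule)
  (fun t => RtoC (phi t) * CInt (fun u => K t u * g u) 0 t)%C
  (fun t => Rabs (phi t) * M) 0 1 _ _ Rle_0_1).
- move=> t ht; rewrite -Cmod_norm Cmod_mult Cmod_R.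
  by apply: Rmult_le_compat_l; [apply: Rabs_pos | apply: hinner].
- by apply: is_CInt => x; apply: continuous_volterra_integrand.
- apply: (is_RInt_ext (fun t => scal M (Rabs (phi t)))) => [t _|].
    by rewrite /scal /= /mult /= Rmult_comm.
  rewrite Rmult_comm; apply: is_RInt_scal.
  apply: (RInt_correct (V:=R_CompleteNormedModule)).
  by apply: ex_RInt_continuous => x _.
Qed.

End Volterra.

Section Wave.

Variable d : nat.
Implicit Types (n : nat) (eta w : 'rV[R]_d).

Lemma vnorm_ge0 w : 0 <= vnorm w.
Proof. exact: sqrt_pos. Qed.

Lemma FG_in_ball n eta s : vnorm eta <= INR n -> vnorm eta <> 0 ->
  FG n s eta = sin (s * vnorm eta) / vnorm eta.
Proof.
move=> hn h0; rewrite /FG.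
by case: Rle_dec => [_|//] /=; case: Req_EM_T.
Qed.

Lemma FG_out_ball n eta s : ~ vnorm eta <= INR n -> FG n s eta = 0.
Proof. by rewrite /FG; case: Rle_dec. Qed.

Lemma Rabs_FG_le n w x : 0 <= x -> Rabs (FG n x w) <= x.
Proof.
rewrite /FG => hx; case: Rle_dec => [_|_] /=; last by rewrite Rabs_R0.
case: Req_EM_T => [_|h0] /=; first by rewrite Rabs_pos_eq //; apply: Rle_refl.
have hw : 0 < vnorm w by have := vnorm_ge0 w; lra.
rewrite Rabs_div // (Rabs_pos_eq (vnorm w)); last lra.
apply: Rle_trans (Rmult_le_compat_r _ _ _ _ (Rabs_sin_le _)) _.
  by apply/Rlt_le/Rinv_0_lt_compat.
by rewrite Rabs_mult !Rabs_pos_eq; [right; field | lra | lra].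
Qed.

Lemma FG_separable n w : exists al be ga de : R -> R,
  [/\ forall x, continuous al x, forall x, continuous be x,
      forall x, continuous ga x, forall x, continuous de x &
      forall t u, FG n (t - u) w = al t * be u + ga t * de u].
Proof.
rewrite /FG; case: Rle_dec => [_|_] /=; last first.
  exists (fun _ => 0), (fun _ => 0), (fun _ => 0), (fun _ => 0).
  by split=> *; [apply: continuous_const.. | ring].
case: Req_EM_T => [_|h0] /=.
- exists id, (fun _ => 1), (fun _ => 1), Ropp.
  by split=> *; [apply: ex_derive_continuous; auto_derive.. | rewrite /id; ring].
- pose a := vnorm w.
  exists (fun t => sin (t * a) / a), (fun u => cos (u * a)),
         (fun t => - cos (t * a) / a), (fun u => sin (u * a)).
  split=> [x|x|x|x|t u]; try by apply: ex_derive_continuous; auto_derive.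
  by rewrite /a Rmult_minus_distr_r sin_minus; field.
Qed.

Definition wave_kernel n (c : R) w (t u : R) : C :=
  (cis (u * c) * RtoC (FG n (t - u) w))%C.

Lemma separable_wave_kernel n c w : separable (wave_kernel n c w).
Proof.
have [al [be [ga [de [hal hbe hga hde eFG]]]]] := FG_separable n w.
exists (fun t => RtoC (al t)), (fun u => RtoC (be u) * cis (u * c))%C,
       (fun t => RtoC (ga t)), (fun u => RtoC (de u) * cis (u * c))%C.
split=> [x|x|x|x|t u]; try apply: continuous_RtoC => //.
- by apply: continuous_Cmult; [apply: continuous_RtoC | apply: continuous_cis_lin].
- by apply: continuous_Cmult; [apply: continuous_RtoC | apply: continuous_cis_lin].
- by rewrite /wave_kernel eFG RtoC_plus !RtoC_mult; ring.
Qed.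

Lemma Cmod_wave_kernel_le n c w t u :
  0 <= u <= t -> t <= 1 -> Cmod (wave_kernel n c w t u) <= 1.
Proof.
move=> hu ht; rewrite /wave_kernel Cmod_mult Cmod_cis Cmod_R Rmult_1_l.
by apply: Rle_trans (Rabs_FG_le _ _ _) _; lra.
Qed.

Definition wave_int n (b : R) eta (u : R) : C :=
  CInt (fun s => cis (s * b) * RtoC (FG n s eta))%C 0 u.

Lemma wave_int_in_ball n b eta u : vnorm eta <= INR n -> vnorm eta <> 0 ->
  wave_int n b eta u =
  ((cis_int (b + vnorm eta) u - cis_int (b - vnorm eta) u)
   / (2 * Ci * RtoC (vnorm eta)))%C.
Proof.
move=> hn h0; rewrite -CInt_cis_sin_div //.
by apply: CInt_ext => s _; rewrite FG_in_ball.
Qed.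

Lemma wave_int_out_ball n b eta u : ~ vnorm eta <= INR n -> wave_int n b eta u = 0%C.
Proof.
move=> hn; rewrite -(CInt_0 0 u); apply: CInt_ext => s _.
by rewrite FG_out_ball //; ring.
Qed.

End Wave.

Section Decomposition.

Variables (d : nat) (phi : R -> R) (n : nat) (xi xi' : R) (eta eta' : 'rV[R]_d).

Let K := wave_kernel n (xi - xi') (vsub eta eta').
Let a := vnorm eta.
Let a' := vnorm eta'.

Lemma LHSint_volterra :
  LHSint phi n xi eta xi' eta' =
  volterra phi K (fun u => wave_int n (- xi) eta u * wave_int n xi' eta' u)%C.
Proof.
apply: CInt_ext => t _; congr Cmult; apply: CInt_ext => u _.
rewrite /K /wave_kernel /wave_int -Cmult_assoc; congr (_ * (_ * _))%C.
- by apply: CInt_ext => s _; congr (cis _ * _)%C; ring.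
- by apply: CInt_ext => r _; congr (cis _ * _)%C; ring.
Qed.

Lemma Mphi_volterra :
  Mphi phi n xi eta xi' eta' =
  (RtoC (1 / (4 * a * a')) *
   volterra phi K (fun u => cis_int (a - xi) u * cis_int (xi' - a') u))%C.
Proof.
congr Cmult; apply: CInt_ext => t _; congr Cmult; apply: CInt_ext => u _.
rewrite /K /wave_kernel /cis_int -Cmult_assoc; congr (_ * (_ * _))%C.
by apply: CInt_ext => s _; congr cis; rewrite /a; ring.
Qed.

Lemma LHSint_out_ball :
  ~ vnorm eta <= INR n \/ ~ vnorm eta' <= INR n -> LHSint phi n xi eta xi' eta' = 0%C.
Proof.
move=> hout; rewrite LHSint_volterra -[RHS](volterra_0 phi K); apply: volterra_ext => u.
case: hout => h; rewrite (wave_int_out_ball _ _ h).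
- exact: Cmult_0_l.
- exact: Cmult_0_r.
Qed.

Hypothesis phi_cont : forall x, continuous phi x.

Lemma Cmod_volterra_nonresonant_le (k : R) :
  0 < a -> 0 < a' -> 0 <= xi -> 0 <= xi' -> 0 <= k <= 1 ->
  (0 < k -> xi <> a) -> (0 < k -> xi' <> a') ->
  Cmod (volterra phi K (nonresonant xi a xi' a')) <=
  RInt (fun t => Rabs (phi t)) 0 1 / (a * a') * bound_bracket k xi eta xi' eta'.
Proof.
move=> ha ha' hxi hxi' hk hk1 hk2.
apply: (Rle_trans _ (RInt (fun t => Rabs (phi t)) 0 1
  * (bound_bracket k xi eta xi' eta' / (a * a')))); last by right; rewrite /Rdiv; ring.
apply: Cmod_volterra_le => //.
- exact: separable_wave_kernel.
- exact: continuous_nonresonant.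
- by move=> t u; apply: Cmod_wave_kernel_le.
- by move=> u hu; apply: Cmod_nonresonant_le.
Qed.

Hypotheses (eta_ball : vnorm eta <= INR n) (eta'_ball : vnorm eta' <= INR n).
Hypotheses (eta_neq0 : vnorm eta <> 0) (eta'_neq0 : vnorm eta' <> 0).

Lemma LHSint_in_ball :
  LHSint phi n xi eta xi' eta' =
  (Mphi phi n xi eta xi' eta' + volterra phi K (nonresonant xi a xi' a'))%C.
Proof.
rewrite LHSint_volterra Mphi_volterra -volterra_lin.
- apply: volterra_ext => u; rewrite !wave_int_in_ball // resonant_split // -/a -/a'.
  have -> : - xi + a = a - xi by ring.
  by have -> : - xi - a = - (xi + a) by ring.
- exact: phi_cont.
- exact: separable_wave_kernel.
- by move=> u; apply: continuous_Cmult; apply: continuous_cis_int.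
- exact: continuous_nonresonant.
Qed.

End Decomposition.

Theorem lemma4p2 (d : nat) (hd : (1 <= d)%nat) (phi : R -> R)
  (hphi : smooth_supp01 phi) :
  exists Rn : nat -> R -> 'rV[R]_d -> R -> 'rV[R]_d -> C,
    (forall (n : nat) (xi : R) (eta : 'rV[R]_d) (xi' : R) (eta' : 'rV[R]_d),
       (1 <= n)%nat -> 0 <= xi -> 0 <= xi' -> ~ (vnorm eta = 0) -> ~ (vnorm eta' = 0) ->
       LHSint phi n xi eta xi' eta' =
       Cmult (RtoC (indic n eta * indic n eta'))
             (Cplus (Mphi phi n xi eta xi' eta') (Rn n xi eta xi' eta')))
    /\
    (forall kappa : R, 0 <= kappa <= 1 ->
       exists Cst : R,
         forall (n : nat) (xi : R) (eta : 'rV[R]_d) (xi' : R) (eta' : 'rV[R]_d),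
           (1 <= n)%nat -> 0 <= xi -> 0 <= xi' -> ~ (vnorm eta = 0) -> ~ (vnorm eta' = 0) ->
           (* vanishing denominators mean the bound is +oo, i.e. trivially true *)
           (0 < kappa -> ~ (xi = vnorm eta)) -> (0 < kappa -> ~ (xi' = vnorm eta')) ->
           Cmod (Rn n xi eta xi' eta') <=
             Cst / (vnorm eta * vnorm eta') * bound_bracket kappa xi eta xi' eta').
Proof.
have phi_cont x : continuous phi x.
  by apply: ex_derive_continuous; exact: (proj1 hphi 1%nat x).
exists (fun n xi eta xi' eta' =>
  volterra phi (wave_kernel n (xi - xi') (vsub eta eta'))
    (nonresonant xi (vnorm eta) xi' (vnorm eta'))); split.
- move=> n xi eta xi' eta' _ _ _ h0 h0'; rewrite /indic.
  case: Rle_dec => hn /=; case: Rle_dec => hn' /=.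
  + by rewrite LHSint_in_ball // Rmult_1_l Cmult_1_l.
  + by rewrite LHSint_out_ball; [rewrite Rmult_0_r Cmult_0_l | right].
  + by rewrite LHSint_out_ball; [rewrite Rmult_0_l Cmult_0_l | left].
  + by rewrite LHSint_out_ball; [rewrite Rmult_0_l Cmult_0_l | left].
- move=> k hk; exists (RInt (fun t => Rabs (phi t)) 0 1).
  move=> n xi eta xi' eta' _ hxi hxi' h0 h0' hk1 hk2.
  have ha := vnorm_ge0 eta; have ha' := vnorm_ge0 eta'.
  by apply: Cmod_volterra_nonresonant_le => //; lra.
Qed.
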